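(* Let $U\subseteq V$, let $H=(U,E(U))$ be the induced subgraph with inherited weights, let $(L,R)$ be a partition of $V\setminus U$ into two (possibly empty) sets, and let $f\in\ell^2(V,w)$ satisfy $f(v)=0$ for $v\notin U$ and $\sum_{v\in U}w_H(v)f(v)^2>0$. Suppose that for every $t$ with $0<t\le\max_v|f(v)|$, $$\min\big(\gamma(L\cup L_f(t),R\cup R_f(t)),\ \gamma(L\cup R_f(t),R\cup L_f(t))\big)>\gamma(L,R).$$ Then $\sqrt{72\,\mathcal R^+_H(f)}\ge\mathcal R^+_G(f)$.
   Context: $G=(V,E,w)$ finite undirected, positive edge weights, $w(v)=\sum_{u\sim v}w(u,v)\ge1$. $E(U)$ is the set of edges with both endpoints in $U$; $w_H(v)=\sum_{u\in U,\{u,v\}\in E}w(u,v)$. $w(E(S))$ is the weight of edges inside $S$; $w(E(S,T))$ the weight of edges between disjoint $S,T$. For disjoint $L,R\subseteq V$, the uncutness is $\gamma(L,R)=w(E(L))+w(E(R))+w(E(L\cup R,V\setminus(L\cup R)))$. For $t>0$, $L_f(t)=\{v:f(v)\le-t\}$, $R_f(t)=\{v:f(v)\ge t\}$. $\mathcal R^+_G(f)=\sum_{\{u,v\}\in E}w(u,v)(f(u)+f(v))^2/\sum_{v\in V}w(v)f(v)^2$ and $\mathcal R^+_H(f)=\sum_{\{u,v\}\in E(U)}w(u,v)(f(u)+f(v))^2/\sum_{v\in U}w_H(v)f(v)^2$. *)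

From HB Require Import structures.
From mathcomp Require Import all_boot all_order all_algebra.
Set Implicit Arguments. Unset Strict Implicit. Unset Printing Implicit Defensive.
Import Order.TTheory GRing.Theory Num.Theory.
Local Open Scope ring_scope.

Section Graph.
Variables (R : rcfType) (T : finType) (w : T -> T -> R).
(* A weighted graph on vertex set T: w u v > 0 iff {u,v} is an edge,
   w u v = 0 otherwise; w symmetric, no self-loops (hypotheses of theorem). *)

Definition wdeg (v : T) : R := \sum_(u : T) w u v.

Definition wdegH (U : {set T}) (v : T) : R := \sum_(u in U) w u v.

(* w(E(S)) : total weight of (unordered) edges with both endpoints in S *)
Definition wE (S : {set T}) : R := 2^-1 * \sum_(u in S) \sum_(v in S) w u v.

Definition wcut (S S' : {set T}) : R := \sum_(u in S) \sum_(v in S') w u v.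

Definition uncut (A B : {set T}) : R :=
  wE A + wE B + wcut (A :|: B) (~: (A :|: B)).

Definition Lset (f : T -> R) (t : R) : {set T} := [set v | f v <= - t].
Definition Rset (f : T -> R) (t : R) : {set T} := [set v | t <= f v].

(* R^+_G(f) ; the sum over unordered edges is half the sum over ordered pairs *)
Definition RayG (f : T -> R) : R :=
  (2^-1 * \sum_(u : T) \sum_(v : T) w u v * (f u + f v) ^+ 2)
  / (\sum_(v : T) wdeg v * f v ^+ 2).

Definition RayH (U : {set T}) (f : T -> R) : R :=
  (2^-1 * \sum_(u in U) \sum_(v in U) w u v * (f u + f v) ^+ 2)
  / (\sum_(v in U) wdegH U v * f v ^+ 2).

Definition maxabs (f : T -> R) : R := \big[Num.max/0]_(v : T) `|f v|.
End Graph.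

From HB Require Import structures.
From mathcomp Require Import all_boot all_order all_algebra.
From mathcomp Require Import ring lra.
Import Order.TTheory GRing.Theory Num.Theory.
Set Implicit Arguments. Unset Strict Implicit. Unset Printing Implicit Defensive.
Local Open Scope ring_scope.

(* Write everything as sums over ordered pairs (u, v) weighted
   by w u v ("pair sums").  With inside = 1[u, v in U] and outside v = 1[v notin U]
   the four quantities of the argument are
     energyH  = sum inside (f u + f v)^2        (twice the numerator of R+_H),
     massH    = sum inside f v^2                (denominator of R+_H),
     boundary = sum outside v * f u^2           (f-mass on edges leaving U),
     crossH   = sum inside |f u + f v| (|f u| + |f v|),
   and, since f vanishes off U, R+_G(f) = (energyH/2 + boundary)/(massH + boundary).
   1. Sweep: for each threshold t, the hypothesis says that both ways of adding
      the level sets L_f(t), R_f(t) to (L, R) increase the uncutness; summing the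
      two increases and symmetrising gives an explicit pair sum (threshold_gain).
      Averaging over t with respect to d(t^2) (an exact layer-cake sum over the
      finitely many levels |f v|) yields boundary <= crossH.
   2. Cauchy-Schwarz in AM-GM form: 2 e crossH <= energyH + 4 e^2 massH for e > 0,
      and energyH <= 4 massH.
   3. Elementary algebra turns these bounds into R+_G(f) <= sqrt(72 R+_H(f)). *)

(* Sums over ordered pairs of vertices weighted by w: the edge sums of the
   paper count every edge twice, and pair sums are linear and monotone. *)
Section PairSums.
Variables (R : rcfType) (T : finType) (w : T -> T -> R).

Definition pairsum (F : T -> T -> R) : R := \sum_u \sum_v w u v * F u v.

Lemma pairsumD (F G : T -> T -> R) :
  pairsum (fun u v => F u v + G u v) = pairsum F + pairsum G.
Proof.
rewrite /pairsum -big_split; apply: eq_bigr => u _.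
rewrite -big_split; apply: eq_bigr => v _ /=; exact: mulrDr.
Qed.

Lemma pairsumZ (a : R) (F : T -> T -> R) :
  pairsum (fun u v => a * F u v) = a * pairsum F.
Proof.
rewrite /pairsum mulr_sumr; apply: eq_bigr => u _.
rewrite mulr_sumr; apply: eq_bigr => v _; exact: mulrCA.
Qed.

Lemma pairsumN (F : T -> T -> R) : pairsum (fun u v => - F u v) = - pairsum F.
Proof.
rewrite -mulN1r -pairsumZ; apply: eq_bigr => u _; apply: eq_bigr => v _.
by rewrite mulN1r.
Qed.

Lemma eq_pairsum (F G : T -> T -> R) :
  (forall u v, F u v = G u v) -> pairsum F = pairsum G.
Proof. by move=> FG; apply: eq_bigr => u _; apply: eq_bigr => v _; rewrite FG. Qed.

Hypothesis w_ge0 : forall u v, 0 <= w u v.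

Lemma pairsum_ge0 (F : T -> T -> R) :
  (forall u v, 0 <= F u v) -> 0 <= pairsum F.
Proof.
by move=> F0; apply: sumr_ge0 => u _; apply: sumr_ge0 => v _; apply: mulr_ge0.
Qed.

Lemma ler_pairsum (F G : T -> T -> R) :
  (forall u v, F u v <= G u v) -> pairsum F <= pairsum G.
Proof.
by move=> FG; apply: ler_sum => u _; apply: ler_sum => v _; apply: ler_wpM2l.
Qed.

Hypothesis w_sym : forall u v, w u v = w v u.

Lemma pairsum_swap (F : T -> T -> R) : pairsum F = pairsum (fun u v => F v u).
Proof.
rewrite /pairsum exchange_big; apply: eq_bigr => u _; apply: eq_bigr => v _.
by rewrite w_sym.
Qed.

Lemma pairsum_sym (F : T -> T -> R) :
  pairsum F = pairsum (fun u v => 2^-1 * (F u v + F v u)).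
Proof.
by rewrite pairsumZ pairsumD -(pairsum_swap F); lra.
Qed.
End PairSums.
Arguments pairsum {R T} w F.

(* For a nondecreasing list s = [a_1; ...; a_n] with p = a_0 <= a_1,
   sqsum p s h = sum_i (a_i^2 - a_(i-1)^2) h(a_i) is a Stieltjes sum of h against
   d(t^2); it is exact on the indicators t |-> 1[t <= c] of levels c in s. *)
Section LayerCake.
Variable R : rcfType.

Fixpoint sqsum (p : R) (s : seq R) (h : R -> R) : R :=
  if s is a :: s' then (a ^+ 2 - p ^+ 2) * h a + sqsum a s' h else 0.

Lemma sqsumD p s (h1 h2 : R -> R) :
  sqsum p s (fun t => h1 t + h2 t) = sqsum p s h1 + sqsum p s h2.
Proof. by elim: s p => [|a s IH] p /=; rewrite ?addr0 // IH; ring. Qed.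

Lemma sqsumZ p s (c : R) (h : R -> R) :
  sqsum p s (fun t => c * h t) = c * sqsum p s h.
Proof. by elim: s p => [|a s IH] p /=; rewrite ?mulr0 // IH; ring. Qed.

Lemma sqsumN p s (h : R -> R) : sqsum p s (fun t => - h t) = - sqsum p s h.
Proof. by elim: s p => [|a s IH] p /=; rewrite ?oppr0 // IH; ring. Qed.

Lemma sqsum_sum (I : finType) p s (F : I -> R -> R) :
  sqsum p s (fun t => \sum_i F i t) = \sum_i sqsum p s (F i).
Proof.
elim: s p => [|a s IH] p /=; first by rewrite big1.
by rewrite IH mulr_sumr -big_split.
Qed.

(* Only the positive points of s carry weight, so positivity of h there suffices. *)
Lemma sqsum_ge0 p s (h : R -> R) :
  0 <= p -> path <=%R p s -> (forall t, t \in s -> 0 < t -> 0 <= h t) ->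
  0 <= sqsum p s h.
Proof.
elim: s p => [|a s IH] p //= p0 /andP[pa ps] h0.
have a0 : 0 <= a := le_trans p0 pa.
apply: addr_ge0; last first.
  by apply: IH => // t ts; apply: h0; rewrite inE ts orbT.
have [apos|] := ltP 0 a.
  by apply: mulr_ge0; [rewrite subr_ge0 ler_sqr | apply: h0; rewrite ?inE ?eqxx].
move=> a_le0; have /eqP a_eq0 : a == 0 by rewrite eq_le a_le0.
have /eqP p_eq0 : p == 0 by rewrite eq_le p0 andbT -a_eq0.
by rewrite a_eq0 p_eq0 subrr mul0r.
Qed.

Lemma sqsum_indicator_below p c s :
  path <=%R p s -> c <= p -> sqsum p s (fun t => (t <= c)%R%:R) = 0.
Proof.
elim: s p => [|a s IH] p //= /andP[pa ps] cp.
rewrite IH ?(le_trans cp pa) // addr0.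
have [ac|] := leP a c; last by rewrite mulr0.
have -> : a = p by apply/eqP; rewrite eq_le pa (le_trans ac cp).
by rewrite subrr mul0r.
Qed.

Lemma sqsum_indicator p c s :
  path <=%R p s -> c \in s -> sqsum p s (fun t => (t <= c)%R%:R) = c ^+ 2 - p ^+ 2.
Proof.
elim: s p => [|a s IH] p //= /andP[pa ps]; rewrite inE => /predU1P[->|cs].
  by rewrite lexx mulr1 sqsum_indicator_below // addr0.
have ac : a <= c by move: (order_path_min le_trans ps) => /allP; apply.
by rewrite ac mulr1 IH //; ring.
Qed.
End LayerCake.
Arguments sqsum {R} p s h.

Lemma sqsum_pairsum (R : rcfType) (T : finType) (w : T -> T -> R) p s
    (F : R -> T -> T -> R) :
  sqsum p s (fun t => pairsum w (F t)) =
  pairsum w (fun u v => sqsum p s (fun t => F t u v)).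
Proof.
rewrite /pairsum sqsum_sum; apply: eq_bigr => u _.
by rewrite sqsum_sum; apply: eq_bigr => v _; rewrite sqsumZ.
Qed.

(* The sorted list of the values |f v|: the only thresholds at which the level
   sets L_f(t), R_f(t) change. *)
Definition levels {R : rcfType} {T : finType} (f : T -> R) : seq R :=
  sort <=%R [seq `|f v| | v <- enum T].

Lemma levels_path (R : rcfType) (T : finType) (f : T -> R) :
  path <=%R 0 (levels f).
Proof.
rewrite path_sortedE; last exact: le_trans.
rewrite sort_sorted ?andbT; last exact: le_total.
by apply/allP => x; rewrite mem_sort => /mapP[v _ ->].
Qed.

Lemma mem_levels (R : rcfType) (T : finType) (f : T -> R) (v : T) :
  `|f v| \in levels f.
Proof. by rewrite mem_sort; apply: map_f; rewrite mem_enum. Qed.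

Lemma levels_le_maxabs (R : rcfType) (T : finType) (f : T -> R) (t : R) :
  t \in levels f -> t <= maxabs f.
Proof. by rewrite mem_sort => /mapP[v _ ->]; exact: le_bigmax. Qed.

Lemma sum2_in (R : rcfType) (T : finType) (F : T -> T -> R) (S S' : {set T}) :
  \sum_(u in S) \sum_(v in S') F u v =
  \sum_u \sum_v F u v * ((u \in S) && (v \in S'))%:R.
Proof.
rewrite big_mkcond; apply: eq_bigr => u _; rewrite big_mkcond /=.
case: (u \in S) => /=; last by rewrite big1 // => v _; rewrite mulr0.
by apply: eq_bigr => v _; case: (v \in S'); rewrite ?mulr1 ?mulr0.
Qed.

(* Contribution of the ordered pair (u, v) to the uncutness gamma(X, Y), given
   the memberships of u and v in X and Y: half an edge inside X or inside Y,
   a whole edge leaving X :|: Y. *)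
Definition uncut_weight {R : rcfType} (xu yu xv yv : bool) : R :=
  2^-1 * (xu && xv)%:R + 2^-1 * (yu && yv)%:R + ((xu || yu) && ~~ (xv || yv))%:R.

Lemma uncut_pairsum (R : rcfType) (T : finType) (w : T -> T -> R) (X Y : {set T}) :
  uncut w X Y =
  pairsum w (fun u v => uncut_weight (u \in X) (u \in Y) (v \in X) (v \in Y)).
Proof.
rewrite /uncut /wE /wcut !sum2_in !mulr_sumr -!big_split; apply: eq_bigr => u _.
rewrite !mulr_sumr -!big_split; apply: eq_bigr => v _ /=.
by rewrite /uncut_weight in_setC !in_setU; ring.
Qed.

Definition swap_gain {R : rcfType} (lu ru au bu lv rv av bv : bool) : R :=
  uncut_weight (lu || au) (ru || bu) (lv || av) (rv || bv)
  + uncut_weight (lu || bu) (ru || au) (lv || bv) (rv || av)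
  - 2 * uncut_weight lu ru lv rv.

(* Truth table of the symmetrised gain; l, r are the memberships in L, R and
   a, b those in the two (disjoint) level sets, which avoid L :|: R. *)
Lemma swap_gain_sym (R : rcfType) (lu ru au bu lv rv av bv : bool) :
  ~~ (lu && ru) -> (lu || ru) ==> ~~ (au || bu) -> ~~ (au && bu) ->
  ~~ (lv && rv) -> (lv || rv) ==> ~~ (av || bv) -> ~~ (av && bv) ->
  2^-1 * (swap_gain lu ru au bu lv rv av bv + swap_gain lv rv av bv lu ru au bu) =
  (~~ (lu || ru))%:R * (~~ (lv || rv))%:R *
     (((au || bu) || (av || bv))%:R - ((au && bv) || (bu && av))%:R)
  - 2^-1 * ((lu || ru)%:R * (av || bv)%:R + (lv || rv)%:R * (au || bu)%:R) :> R.
Proof.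
by case: lu; case: ru; case: au; case: bu; case: lv; case: rv; case: av; case: bv;
  rewrite //= /swap_gain /uncut_weight /=; lra.
Qed.

Definition inside {R : rcfType} {T : finType} (U : {set T}) (u v : T) : R :=
  ((u \in U) && (v \in U))%:R.
Definition outside {R : rcfType} {T : finType} (U : {set T}) (u : T) : R :=
  (u \notin U)%:R.

(* The symmetrised gain of the pair (x, y) = (f u, f v) at threshold t, with
   a = 1[u, v in U] and cx, cy the outside indicators of u and v. *)
Definition pair_gain {R : rcfType} (t x y a cx cy : R) : R :=
  a * ((t <= Num.max `|x| `|y|)%R%:R
       - (x * y < 0)%R%:R * (t <= Num.min `|x| `|y|)%R%:R)
  - 2^-1 * (cx * (t <= `|y|)%R%:R + cy * (t <= `|x|)%R%:R).

Lemma opposite_sides_indicator (R : rcfType) (t x y : R) : 0 < t ->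
  (((x <= -t) && (t <= y)) || ((t <= x) && (y <= -t)))%:R =
  (x * y < 0)%R%:R * (t <= Num.min `|x| `|y|)%R%:R :> R.
Proof.
move=> t0; rewrite le_min !ler_normr !(lerNr t).
case: (leP x (-t)) => h1; case: (leP t x) => h2; case: (leP y (-t)) => h3;
  case: (leP t y) => h4; rewrite /= ?mulr0 ?mulr1 //; case: ltP => // h5; nra.
Qed.

(* The threshold hypothesis at a single t: summing the two uncutness increases
   and symmetrising gives a positive pair sum of pair_gain. *)
Lemma threshold_gain (R : rcfType) (T : finType) (w : T -> T -> R)
  (w_sym : forall u v, w u v = w v u) (U L Rs : {set T})
  (hLR : [disjoint L & Rs]) (hcover : L :|: Rs = ~: U)
  (f : T -> R) (f_supp : forall v, v \notin U -> f v = 0) (t : R) (t0 : 0 < t) :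
  uncut w L Rs < Num.min (uncut w (L :|: Lset f t) (Rs :|: Rset f t))
                         (uncut w (L :|: Rset f t) (Rs :|: Lset f t)) ->
  0 < pairsum w (fun u v =>
        pair_gain t (f u) (f v) (inside U u v) (outside U u) (outside U v)).
Proof.
rewrite lt_min => /andP[gainLR gainRL].
have outLR u : (u \notin U) = (u \in L) || (u \in Rs).
  by rewrite -in_setC -hcover in_setU.
have notLR u : ~~ ((u \in L) && (u \in Rs)).
  by apply/negP => /andP[uL uR]; move/disjointFr: hLR => /(_ u uL); rewrite uR.
have out_small u : ((u \in L) || (u \in Rs)) ==> ~~ ((f u <= - t) || (t <= f u)).
  by apply/implyP; rewrite -outLR => /f_supp ->; rewrite oppr_ge0 !leNgt t0.
have not_both u : ~~ ((f u <= - t) && (t <= f u)).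
  by apply/negP => /andP[le_ft le_tf]; clear -t0 le_ft le_tf; lra.
have : 0 < uncut w (L :|: Lset f t) (Rs :|: Rset f t)
           + uncut w (L :|: Rset f t) (Rs :|: Lset f t) - 2 * uncut w L Rs by lra.
rewrite !uncut_pairsum -pairsumZ -pairsumD -pairsumN -pairsumD pairsum_sym //.
congr (0 < _); apply: eq_pairsum => u v.
rewrite !in_setU !inE -/(swap_gain _ _ _ _ _ _ _ _) -/(swap_gain _ _ _ _ _ _ _ _).
rewrite swap_gain_sym // -!outLR -natrM mulnb.
rewrite /pair_gain /inside /outside le_max !ler_normr !(lerNr t) !negbK.
rewrite opposite_sides_indicator //.
by case: (f u <= -t); case: (t <= f u); case: (f v <= -t); case: (t <= f v).
Qed.

Lemma sqsum_pair_gain (R : rcfType) (s : seq R) (x y a cx cy : R) :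
  path <=%R 0 s -> `|x| \in s -> `|y| \in s ->
  sqsum 0 s (fun t => pair_gain t x y a cx cy) =
  a * (Num.max `|x| `|y| ^+ 2 - (x * y < 0)%R%:R * Num.min `|x| `|y| ^+ 2)
  - 2^-1 * (cx * y ^+ 2 + cy * x ^+ 2).
Proof.
move=> s0 xs ys.
have maxs : Num.max `|x| `|y| \in s by case: leP.
have mins : Num.min `|x| `|y| \in s by case: leP.
rewrite /pair_gain !(sqsumD, sqsumN, sqsumZ) !sqsum_indicator // expr0n /= !subr0.
by rewrite !real_normK ?num_real.
Qed.

(* The averaged inside part of pair_gain is dominated by |x+y|(|x|+|y|): with
   |y| <= |x|, equality holds for opposite signs and otherwise |x+y| = |x|+|y|. *)
Lemma sweep_pair_le (R : rcfType) (x y : R) :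
  Num.max `|x| `|y| ^+ 2 - (x * y < 0)%R%:R * Num.min `|x| `|y| ^+ 2
  <= `|x + y| * (`|x| + `|y|).
Proof.
wlog le_yx : x y / `|y| <= `|x|.
  move=> H; case/orP: (le_total `|y| `|x|) => [/H //|/H].
  by rewrite maxC minC [y * x]mulrC [y + x]addrC [`|y| + `|x|]addrC.
rewrite (max_idPl le_yx) (min_idPr le_yx).
have [hx|hx] := leP 0 x; have [hy|hy] := leP 0 y; have [hs|hs] := leP 0 (x + y);
  move: le_yx; rewrite ?(ger0_norm hx) ?(ltr0_norm hx) ?(ger0_norm hy)
    ?(ltr0_norm hy) ?(ger0_norm hs) ?(ltr0_norm hs) => le_yx;
  case: ltP => //= xy; nra.
Qed.

Lemma amgm_pair (R : rcfType) (e x y : R) :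
  2 * e * (`|x + y| * (`|x| + `|y|)) <= (x + y) ^+ 2 + 2 * e ^+ 2 * (x ^+ 2 + y ^+ 2).
Proof.
rewrite -(real_normK (num_real (x + y))) -(real_normK (num_real x)).
rewrite -(real_normK (num_real y)).
have := sqr_ge0 (`|x + y| - e * (`|x| + `|y|)).
have := mulr_ge0 (sqr_ge0 e) (sqr_ge0 (`|x| - `|y|)).
nra.
Qed.

Section Sweep.
Variables (R : rcfType) (T : finType) (w : T -> T -> R).
Hypothesis w_sym : forall u v, w u v = w v u.
Hypothesis w_ge0 : forall u v, 0 <= w u v.
Variables (U : {set T}) (f : T -> R).

Definition energyH : R := pairsum w (fun u v => inside U u v * (f u + f v) ^+ 2).
Definition massH : R := pairsum w (fun u v => inside U u v * f v ^+ 2).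
Definition boundary : R := pairsum w (fun u v => outside U v * f u ^+ 2).
Definition crossH : R :=
  pairsum w (fun u v => inside U u v * (`|f u + f v| * (`|f u| + `|f v|))).

Lemma inside_ge0 u v : 0 <= inside U u v :> R.
Proof. exact: ler0n. Qed.

Lemma energyH_ge0 : 0 <= energyH.
Proof. by apply: pairsum_ge0 => // u v; rewrite mulr_ge0 ?inside_ge0 ?sqr_ge0. Qed.

Lemma boundary_ge0 : 0 <= boundary.
Proof. by apply: pairsum_ge0 => // u v; rewrite mulr_ge0 ?ler0n ?sqr_ge0. Qed.

Lemma massH_swap : pairsum w (fun u v => inside U u v * f u ^+ 2) = massH.
Proof.
rewrite (pairsum_swap w_sym); apply: eq_pairsum => u v.
by rewrite /inside andbC.
Qed.

Lemma boundary_swap : pairsum w (fun u v => outside U u * f v ^+ 2) = boundary.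
Proof. exact: pairsum_swap. Qed.

Lemma massH_eq : \sum_(v in U) wdegH w U v * f v ^+ 2 = massH.
Proof.
under eq_bigr do rewrite /wdegH mulr_suml.
rewrite (sum2_in (fun v u => w u v * f v ^+ 2)) /massH /pairsum exchange_big /=.
by apply: eq_bigr => u _; apply: eq_bigr => v _; rewrite /inside andbC mulrAC -mulrA.
Qed.

Lemma RayH_eq : RayH w U f = (2^-1 * energyH) / massH.
Proof.
rewrite /RayH massH_eq sum2_in /energyH /pairsum; congr (2^-1 * _ / _).
by apply: eq_bigr => u _; apply: eq_bigr => v _; rewrite mulrAC -mulrA.
Qed.

(* (f u + f v)^2 <= 2 f u^2 + 2 f v^2. *)
Lemma energyH_le : energyH <= 4 * massH.
Proof.
have -> : 4 * massH = pairsum w (fun u v =>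
    2 * (inside U u v * f u ^+ 2) + 2 * (inside U u v * f v ^+ 2)).
  by rewrite pairsumD !pairsumZ massH_swap -/massH; ring.
apply: (ler_pairsum w_ge0) => u v.
by have := mulr_ge0 (inside_ge0 u v) (sqr_ge0 (f u - f v)); nra.
Qed.

Lemma crossH_amgm e : 0 < e -> 2 * e * crossH <= energyH + 4 * e ^+ 2 * massH.
Proof.
move=> e0.
have -> : energyH + 4 * e ^+ 2 * massH = pairsum w (fun u v =>
    inside U u v * (f u + f v) ^+ 2
    + 2 * e ^+ 2 * (inside U u v * f u ^+ 2 + inside U u v * f v ^+ 2)).
  by rewrite pairsumD pairsumZ pairsumD massH_swap -/energyH -/massH; ring.
rewrite /crossH -pairsumZ; apply: (ler_pairsum w_ge0) => u v.
by have := amgm_pair e (f u) (f v); have := inside_ge0 u v; nra.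
Qed.

Hypothesis f_supp : forall v, v \notin U -> f v = 0.

(* Since f vanishes off U, the numerator and denominator of R+_G split into
   their H-parts plus boundary terms. *)
Lemma RayG_eq :
  RayG w f = (2^-1 * (energyH + 2 * boundary)) / (massH + boundary).
Proof.
have split_sq u v : (f u + f v) ^+ 2 = inside U u v * (f u + f v) ^+ 2
    + (outside U v * f u ^+ 2 + outside U u * f v ^+ 2).
  rewrite /inside /outside.
  by case: (boolP (u \in U)) => [uU|/f_supp ->]; case: (boolP (v \in U)) => [vU|/f_supp ->];
    rewrite /= ?(mul1r, mul0r, add0r, addr0, expr0n).
have split_f2 u v : f v ^+ 2 = inside U u v * f v ^+ 2 + outside U u * f v ^+ 2.
  rewrite /inside /outside.
  by case: (boolP (u \in U)) => uU; case: (boolP (v \in U)) => [vU|/f_supp ->];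
    rewrite /= ?(mul1r, mul0r, add0r, addr0, expr0n).
have num : \sum_u \sum_v w u v * (f u + f v) ^+ 2 = energyH + 2 * boundary.
  rewrite -[LHS]/(pairsum w (fun u v => (f u + f v) ^+ 2)).
  by rewrite (eq_pairsum w split_sq) !pairsumD boundary_swap -/energyH mulr_natl mulr2n.
have den : \sum_v wdeg w v * f v ^+ 2 = massH + boundary.
  transitivity (pairsum w (fun u v => f v ^+ 2)).
    by rewrite /pairsum exchange_big; apply: eq_bigr => v _; rewrite /wdeg mulr_suml.
  by rewrite (eq_pairsum w split_f2) pairsumD boundary_swap.
by rewrite /RayG num den.
Qed.

(* The sweep: averaging threshold_gain over all thresholds t against d(t^2)
   bounds the boundary mass by crossH. *)
Lemma boundary_le_cross (L Rs : {set T}) :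
  [disjoint L & Rs] -> L :|: Rs = ~: U ->
  (forall t, 0 < t -> t <= maxabs f ->
     uncut w L Rs < Num.min (uncut w (L :|: Lset f t) (Rs :|: Rset f t))
                            (uncut w (L :|: Rset f t) (Rs :|: Lset f t))) ->
  boundary <= crossH.
Proof.
move=> hLR hcover hthr.
have gain_ge0 : 0 <= sqsum 0 (levels f) (fun t => pairsum w (fun u v =>
    pair_gain t (f u) (f v) (inside U u v) (outside U u) (outside U v))).
  apply: sqsum_ge0 (levels_path f) _ => // t ts t0.
  exact/ltW/(threshold_gain w_sym hLR hcover f_supp t0)/hthr/levels_le_maxabs.
rewrite -subr_ge0; apply: (le_trans gain_ge0); rewrite sqsum_pairsum.
have -> : crossH - boundary = pairsum w (fun u v =>
    inside U u v * (`|f u + f v| * (`|f u| + `|f v|))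
    - 2^-1 * (outside U u * f v ^+ 2 + outside U v * f u ^+ 2)).
  by rewrite pairsumD pairsumN pairsumZ pairsumD boundary_swap -/crossH -/boundary; lra.
apply: (ler_pairsum w_ge0) => u v.
rewrite sqsum_pair_gain ?levels_path ?mem_levels // lerD2r.
by rewrite ler_wpM2l ?sweep_pair_le ?inside_ge0.
Qed.
End Sweep.

(* Optimising the AM-GM bound over e (e = sqrt(N/D)/2, or e -> 0 when N = 0):
   K <= 2 sqrt(N/D) D. *)
Lemma amgm_limit (R : rcfType) (N D K : R) : 0 < D -> 0 <= N ->
  (forall e, 0 < e -> 2 * e * K <= N + 4 * e ^+ 2 * D) ->
  K <= 2 * Num.sqrt (N / D) * D.
Proof.
move=> D0 N0 amgm; set s := Num.sqrt (N / D).
have s0 : 0 <= s := sqrtr_ge0 _.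
have NE : N = s ^+ 2 * D.
  by rewrite /s sqr_sqrtr ?divfK ?gt_eqF // divr_ge0 // ltW.
have [spos|s_le0] := ltP 0 s.
  have := amgm (s / 2) (divr_gt0 spos (ltr0Sn _ 1)).
  have -> : 2 * (s / 2) = s by field.
  have -> : 4 * (s / 2) ^+ 2 = s ^+ 2 by field.
  by rewrite NE => amgm_s; rewrite -(ler_pM2l spos); lra.
have s_eq0 : s = 0 by apply/eqP; rewrite eq_le s_le0 s0.
rewrite s_eq0 mulr0 mul0r leNgt; apply/negP => K0.
have e0 : 0 < K / (4 * D) by apply: divr_gt0 => //; lra.
have := amgm _ e0; rewrite NE s_eq0 expr0n /= mul0r add0r.
have -> : 4 * (K / (4 * D)) ^+ 2 * D = 2^-1 * (2 * (K / (4 * D)) * K).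
  by field; rewrite gt_eqF.
have := mulr_gt0 (mulr_gt0 (ltr0Sn R 1) e0) K0; lra.
Qed.

(* Final algebra: with N = energyH, D = massH, B = boundary, K = crossH,
   (N/2 + B)/(D + B) <= 6 sqrt(N/D) = sqrt(72 (N/2)/D). *)
Lemma rayleigh_bound (R : rcfType) (N D B K : R) :
  0 < D -> 0 <= N -> 0 <= B -> B <= K -> N <= 4 * D ->
  (forall e, 0 < e -> 2 * e * K <= N + 4 * e ^+ 2 * D) ->
  (2^-1 * (N + 2 * B)) / (D + B) <= Num.sqrt (72%:R * ((2^-1 * N) / D)).
Proof.
move=> D0 N0 B0 BK ND amgm.
have K_le := amgm_limit D0 N0 amgm; set s := Num.sqrt (N / D) in K_le *.
have s0 : 0 <= s := sqrtr_ge0 _.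
have NE : N = s ^+ 2 * D.
  by rewrite /s sqr_sqrtr ?divfK ?gt_eqF // divr_ge0 // ltW.
have s_le2 : s <= 2.
  have : s ^+ 2 <= 2 ^+ 2 by rewrite -(ler_pM2r D0) -NE; lra.
  by rewrite ler_sqr ?nnegrE.
have -> : 72%:R * ((2^-1 * N) / D) = (6 * s) ^+ 2.
  by rewrite NE; field; rewrite gt_eqF.
rewrite sqrtr_sqr ger0_norm ?mulr_ge0 // ler_pdivrMr; last by lra.
have s2 : 0 <= 2 - s by rewrite subr_ge0.
have := mulr_ge0 (mulr_ge0 s0 s2) (ltW D0).
have := mulr_ge0 s0 B0; rewrite NE; lra.
Qed.

Theorem mainTheorem14 (R : rcfType) (T : finType) (w : T -> T -> R)
  (w_sym : forall u v, w u v = w v u)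
  (w_ge0 : forall u v, 0 <= w u v)
  (w_noloop : forall v, w v v = 0)
  (deg_ge1 : forall v, 1 <= wdeg w v)
  (U L Rs : {set T})
  (hLR : [disjoint L & Rs])
  (hcover : L :|: Rs = ~: U)
  (f : T -> R)
  (f_supp : forall v, v \notin U -> f v = 0)
  (f_pos : 0 < \sum_(v in U) wdegH w U v * f v ^+ 2)
  (hthr : forall t, 0 < t -> t <= maxabs f ->
     Num.min (uncut w (L :|: Lset f t) (Rs :|: Rset f t))
             (uncut w (L :|: Rset f t) (Rs :|: Lset f t))
     > uncut w L Rs) :
  Num.sqrt (72%:R * RayH w U f) >= RayG w f.
Proof.
rewrite (RayG_eq w_sym f_supp) RayH_eq; apply: rayleigh_bound.
- by rewrite -massH_eq.
- exact: energyH_ge0.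
- exact: boundary_ge0.
- exact: boundary_le_cross hLR hcover hthr.
- exact: energyH_le.
- exact: crossH_amgm.
Qed.
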